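(* Let $G$ be a group generated by a finite symmetric set $S$ and let $|\cdot|\colon S\to\{0,1\}$ be a pseudolength on $S$, extended to the word pseudonorm $|g|=\min\{\sum_{i=1}^k|s_i| : g=s_1\cdots s_k,\ s_i\in S\}$ on $G$. If the subgroup $G_0=\langle\{s\in S : |s|=0\}\rangle$ is finite, then for every $n\in\mathbb{N}$ the set $B_{G,S,|\cdot|}(n)=\{g\in G : |g|\le n\}$ is finite, so the function $\gamma_{G,S,|\cdot|}(n)=|B_{G,S,|\cdot|}(n)|$ is well defined, and $\gamma_{G,S,|\cdot|}\sim\gamma_{G,S}$, where $\gamma_{G,S}$ is the usual growth function obtained by giving length $1$ to each generator.
   Context: For non-decreasing $f,g\colon\mathbb{N}\to\mathbb{N}$, write $f\lesssim g$ if there exists $C\in\mathbb{N}_{>0}$ with $f(n)\le g(Cn)$ for all $n\ge1$, and $f\sim g$ if $f\lesssim g$ and $g\lesssim f$. $\gamma_{G,S}(n)$ is the number of elements of $G$ of word length at most $n$ with respect to $S$. *)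

From Stdlib Require Import List Arith.
Import ListNotations.

Record Group := {
  carrier :> Type;
  gmul : carrier -> carrier -> carrier;
  ginv : carrier -> carrier;
  gone : carrier;
  gmul_assoc : forall x y z, gmul x (gmul y z) = gmul (gmul x y) z;
  gmul_1l : forall x, gmul gone x = x;
  gmul_Vl : forall x, gmul (ginv x) x = gone
}.

Section Words.
Variable G : Group.

Definition wprod (w : list G) : G := fold_right (gmul G) (gone G) w.

Definition word_over (P : G -> Prop) (w : list G) : Prop :=
  forall x, In x w -> P x.

Definition inS (S : list G) (x : G) : Prop := In x S.

Definition symmetric_set (S : list G) : Prop :=
  forall s, In s S -> In (ginv G s) S.
Definition generates (S : list G) : Prop :=
  forall g, exists w, word_over (inS S) w /\ wprod w = g.

(* a pseudolength S -> {0,1} (values outside S are irrelevant) *)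
Definition pseudolength01 (S : list G) (len : G -> nat) : Prop :=
  forall s, In s S -> len s <= 1.

Definition wweight (len : G -> nat) (w : list G) : nat :=
  list_sum (map len w).

Definition pnorm_le (S : list G) (len : G -> nat) (g : G) (n : nat) : Prop :=
  exists w, word_over (inS S) w /\ wprod w = g /\ wweight len w <= n.

Definition ball (S : list G) (len : G -> nat) (n : nat) : G -> Prop :=
  fun g => pnorm_le S len g n.

Definition zero_gen (S : list G) (len : G -> nat) (x : G) : Prop :=
  In x S /\ len x = 0.
Definition in_G0 (S : list G) (len : G -> nat) (g : G) : Prop :=
  exists w, word_over (fun x => zero_gen S len x \/ zero_gen S len (ginv G x)) w
            /\ wprod w = g.

Definition finite_set (P : G -> Prop) : Prop :=
  exists l : list G, forall g, P g -> In g l.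

Definition has_card (P : G -> Prop) (k : nat) : Prop :=
  exists l : list G, NoDup l /\ (forall g, In g l <-> P g) /\ length l = k.

End Words.

Definition one_len {G : Group} : G -> nat := fun _ => 1.

(* f <~ g  : exists C > 0, forall n >= 1, f n <= g (C n),
   for growth functions given as cardinalities of balls *)
Definition growth_le (G : Group) (S1 : list G) (l1 : G -> nat)
  (S2 : list G) (l2 : G -> nat) : Prop :=
  exists C : nat, 0 < C /\ forall n k1 k2, 1 <= n ->
    has_card G (ball G S1 l1 n) k1 -> has_card G (ball G S2 l2 (C * n)) k2 ->
    k1 <= k2.

(* Every element of the finite group G0 is a product of at most M generators, for
   some M.  Reading a word from the right, the trailing G0-factor can be kept at
   the front: a letter of pseudolength 0 is absorbed into it, and a letter of
   pseudolength 1 is paid for together with at most M letters spelling out the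
   current G0-factor.  Hence a word of weight n represents g0 g' with g0 in G0
   and g' of word length at most (M+1) n, so |g|_S <= M + (M+1) |g|.  Conversely
   |g| <= |g|_S since generators have pseudolength at most 1, and balls for the
   word length are finite because S is. *)

From Stdlib Require Import List Arith Lia.
Import ListNotations.

Section WordPseudonorm.
Variable G : Group.
Variable S : list G.

Lemma wprod_app (u v : list G) :
  wprod G (u ++ v) = gmul G (wprod G u) (wprod G v).
Proof.
  induction u as [|a u IH]; simpl.
  - now rewrite gmul_1l.
  - unfold wprod in *; simpl. rewrite IH. apply gmul_assoc.
Qed.

Lemma wweight_app (len : G -> nat) (u v : list G) :
  wweight G len (u ++ v) = wweight G len u + wweight G len v.
Proof. unfold wweight. now rewrite map_app, list_sum_app. Qed.

Lemma wweight_one_len (w : list G) : wweight G one_len w = length w.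
Proof. induction w as [|a w IH]; simpl; auto. unfold wweight in *; simpl. now rewrite IH. Qed.

Lemma wweight_le_length (len : G -> nat) (w : list G) :
  pseudolength01 G S len -> word_over G (inS G S) w -> wweight G len w <= length w.
Proof.
  intros Hlen Hw. induction w as [|a w IH]; unfold wweight in *; simpl; auto.
  assert (len a <= 1) by (apply Hlen, Hw; simpl; auto).
  assert (list_sum (map len w) <= length w) by (apply IH; intros x Hx; apply Hw; simpl; auto).
  lia.
Qed.

Lemma ball_mono (len : G -> nat) m n g :
  m <= n -> ball G S len m g -> ball G S len n g.
Proof. intros Hmn [w [Hw [Hp Hwt]]]. exists w. repeat split; auto. lia. Qed.

Lemma ball_mul (len : G -> nat) m n x y :
  ball G S len m x -> ball G S len n y -> ball G S len (m + n) (gmul G x y).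
Proof.
  intros [u [Hu [<- Hut]]] [v [Hv [<- Hvt]]]. exists (u ++ v). repeat split.
  - intros z Hz. apply in_app_or in Hz as [Hz|Hz]; [apply Hu|apply Hv]; auto.
  - apply wprod_app.
  - rewrite wweight_app. lia.
Qed.

Lemma ball_cons (len : G -> nat) n a g :
  In a S -> ball G S len n g -> ball G S len (len a + n) (gmul G a g).
Proof.
  intros Ha [w [Hw [<- Hwt]]]. exists (a :: w). repeat split.
  - intros z [<-|Hz]; [exact Ha | apply Hw; exact Hz].
  - unfold wweight in *; simpl. lia.
Qed.

Lemma ball_le_one_len (len : G -> nat) n g :
  pseudolength01 G S len -> ball G S one_len n g -> ball G S len n g.
Proof.
  intros Hlen [w [Hw [Hp Hwt]]]. exists w. repeat split; auto.
  rewrite wweight_one_len in Hwt. pose proof (wweight_le_length len w Hlen Hw). lia.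
Qed.

Lemma finite_set_ball_bounded (P : G -> Prop) :
  generates G S -> finite_set G P ->
  exists M, forall g, P g -> ball G S one_len M g.
Proof.
  intros HSgen [l Hl].
  enough (Hlist : exists M, forall g, In g l -> ball G S one_len M g)
    by (destruct Hlist as [M HM]; exists M; auto).
  clear Hl. induction l as [|a l [M HM]].
  - exists 0. intros g [].
  - destruct (HSgen a) as [u [Hu Hpu]].
    exists (max M (length u)). intros g [<-|Hg].
    + exists u. rewrite wweight_one_len. repeat split; auto. lia.
    + apply (ball_mono one_len M); [lia | auto].
Qed.

Fixpoint products_upto (m : nat) : list G :=
  match m with
  | 0 => [gone G]
  | Datatypes.S m => gone G :: flat_map (fun s => map (gmul G s) (products_upto m)) S
  end.

Lemma ball_one_len_in_products_upto m g :
  ball G S one_len m g -> In g (products_upto m).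
Proof.
  intros [w [Hw [<- Hwt]]]. rewrite wweight_one_len in Hwt.
  revert w Hw Hwt; induction m as [|m IH]; intros [|a w] Hw Hwt; simpl in *;
    try (left; reflexivity); try lia.
  right. apply in_flat_map. exists a. split.
  - apply Hw; simpl; auto.
  - apply in_map, IH; [intros x Hx; apply Hw; simpl; auto | lia].
Qed.

Lemma ball_one_len_finite m : finite_set G (ball G S one_len m).
Proof. exists (products_upto m). apply ball_one_len_in_products_upto. Qed.

Lemma growth_le_of_ball_incl (l1 l2 : G -> nat) C :
  0 < C -> (forall n g, 1 <= n -> ball G S l1 n g -> ball G S l2 (C * n) g) ->
  growth_le G S l1 S l2.
Proof.
  intros HC Hincl. exists C. split; [exact HC|].
  intros n k1 k2 Hn [b1 [Hnd1 [Hb1 <-]]] [b2 [_ [Hb2 <-]]].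
  apply NoDup_incl_length; auto.
  intros g Hg. apply Hb2, Hincl, Hb1; auto.
Qed.

Section FiniteG0.
Variable len : G -> nat.
Hypothesis Hlen : pseudolength01 G S len.
Variable M : nat.
Hypothesis HG0M : forall g, in_G0 G S len g -> ball G S one_len M g.

Lemma in_G0_one : in_G0 G S len (gone G).
Proof. exists []. split; [intros x [] | reflexivity]. Qed.

Lemma in_G0_cons a g :
  In a S -> len a = 0 -> in_G0 G S len g -> in_G0 G S len (gmul G a g).
Proof.
  intros Ha Ha0 [w [Hw <-]]. exists (a :: w). split; [|reflexivity].
  intros x [<-|Hx]; [left; split; auto | apply Hw; exact Hx].
Qed.

Lemma word_factor_G0 w : word_over G (inS G S) w ->
  exists g0 g', in_G0 G S len g0 /\ ball G S one_len ((M + 1) * wweight G len w) g' /\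
    wprod G w = gmul G g0 g'.
Proof.
  induction w as [|a w IH]; intros Hw.
  - exists (gone G), (gone G). repeat split.
    + apply in_G0_one.
    + exists []. split; [intros x [] | split; [reflexivity | apply Nat.le_0_l]].
    + simpl. now rewrite gmul_1l.
  - assert (Ha : In a S) by (apply Hw; simpl; auto).
    destruct IH as [g0 [g' [Hg0 [Hg' Heq]]]]; [intros x Hx; apply Hw; simpl; auto|].
    change (wprod G (a :: w)) with (gmul G a (wprod G w)). rewrite Heq.
    replace (wweight G len (a :: w)) with (len a + wweight G len w) by reflexivity.
    assert (len a <= 1) by (apply Hlen, Ha).
    destruct (len a) as [|[|k]] eqn:Ea; [| | lia].
    + exists (gmul G a g0), g'. repeat split; auto.
      * now apply in_G0_cons.
      * apply gmul_assoc.
    + exists (gone G), (gmul G a (gmul G g0 g')). repeat split.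
      * apply in_G0_one.
      * apply (ball_mono one_len (one_len a + (M + (M + 1) * wweight G len w)));
          [unfold one_len; lia|].
        apply ball_cons, ball_mul; auto.
      * now rewrite gmul_1l.
Qed.

Lemma ball_le_pseudonorm n g :
  ball G S len n g -> ball G S one_len (M + (M + 1) * n) g.
Proof.
  intros [w [Hw [<- Hwt]]].
  destruct (word_factor_G0 w Hw) as [g0 [g' [Hg0 [Hg' ->]]]].
  apply ball_mul; [auto|].
  apply (ball_mono one_len ((M + 1) * wweight G len w)); [nia | exact Hg'].
Qed.

End FiniteG0.

End WordPseudonorm.

Theorem mainTheorem6 (G : Group) (S : list G) (len : G -> nat)
  (HSsym : symmetric_set G S) (HSgen : generates G S)
  (Hlen : pseudolength01 G S len)
  (HG0 : finite_set G (in_G0 G S len)) :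
  (forall n, finite_set G (ball G S len n)) /\
  growth_le G S len S one_len /\ growth_le G S one_len S len.
Proof.
  destruct (finite_set_ball_bounded G S _ HSgen HG0) as [M HM].
  pose proof (ball_le_pseudonorm G S len Hlen M HM) as Hball.
  split; [|split].
  - intros n. destruct (ball_one_len_finite G S (M + (M + 1) * n)) as [l Hl].
    exists l. auto.
  - apply (growth_le_of_ball_incl G S len one_len (2 * M + 1)); [lia|].
    intros n g Hn Hg. apply (ball_mono G S one_len (M + (M + 1) * n)); auto. nia.
  - apply (growth_le_of_ball_incl G S one_len len 1); [lia|].
    intros n g _ Hg. rewrite Nat.mul_1_l. now apply ball_le_one_len.
Qed.
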